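(* Let $D=(V,A)$ be a digraph, $\{S,T\}$ a partition of $V$ with $S,T\ne\emptyset$, $H=A[S,T]$ the set of arcs from $S$ to $T$, and $k$ an integer. Let $\mathcal{C}_1=\{\delta^-_H(U):\emptyset\neq U\subseteq T\}$ and define $g_1:\mathcal{C}_1\to\mathbb{Z}$ by $g_1(C)=\max\{k-d^-_{A[T]}(U): \emptyset\ne U\subseteq T,\ C=\delta^-_H(U)\}$. Then $\mathcal{C}_1$ is an intersecting family on $H$ and $g_1$ is intersecting supermodular. Moreover, if $k\le \min\{|\delta^-_A(U)|:\emptyset\neq U\subseteq T\}$, then $g_1(C)\le\min\{k,|C|\}$ for every $C\in\mathcal{C}_1$.
   Context: For $B\subseteq A$ and $U\subseteq V$, $\delta^-_B(U)$ is the set of arcs of $B$ entering $U$ and $d^-_B(U)=|\delta^-_B(U)|$; $A[T]$ is the set of arcs with both ends in $T$. A family $\mathcal{C}\subseteq 2^H$ is intersecting if $X\cup Y,X\cap Y\in\mathcal{C}$ whenever $X,Y\in\mathcal{C}$ and $X\cap Y\ne\emptyset$; $g:\mathcal{C}\to\mathbb{R}$ is intersecting supermodular if $g(X)+g(Y)\le g(X\cup Y)+g(X\cap Y)$ for all such $X,Y$. *)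

(* A digraph D = (V, A) is a finite vertex type V, a finite
   arc type A (parallel arcs and loops allowed) and tail/head maps A -> V. *)
From HB Require Import structures.
From mathcomp Require Import all_boot all_order all_algebra.
Set Implicit Arguments. Unset Strict Implicit. Unset Printing Implicit Defensive.
Import Order.TTheory GRing.Theory Num.Theory.

Section Digraph.
Variables (V A : finType) (tail head : A -> V).

Definition din (B : {set A}) (U : {set V}) : {set A} :=
  [set a in B | (head a \in U) && (tail a \notin U)].

Definition ddin (B : {set A}) (U : {set V}) : nat := #|din B U|.

Definition arcs_between (X Y : {set V}) : {set A} :=
  [set a | (tail a \in X) && (head a \in Y)].

Definition induced (X : {set V}) : {set A} := arcs_between X X.

Definition C1 (S T : {set V}) : {set {set A}} :=
  [set din (arcs_between S T) U | U in [set U : {set V} | (U != set0) && (U \subset T)]].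

(* The default k - |A| of the iterated max is a lower bound of every term
   (d^-_{A[T]}(U) <= |A|), so it does not affect the value on C_1. *)
Definition g1 (S T : {set V}) (k : int) (C : {set A}) : int :=
  \big[Num.max/(k - (#|A|)%:Z)%R]_(U : {set V} |
      (U != set0) && (U \subset T) && (C == din (arcs_between S T) U))
    (k - (ddin (induced T) U)%:Z)%R.

End Digraph.

Definition intersecting_family (X : finType) (H : {set X}) (F : {set {set X}}) : Prop :=
  (forall C, C \in F -> C \subset H) /\
  (forall C1 C2, C1 \in F -> C2 \in F -> C1 :&: C2 != set0 ->
     (C1 :|: C2 \in F) /\ (C1 :&: C2 \in F)).

Definition intersecting_supermodular (X : finType) (F : {set {set X}})
    (g : {set X} -> int) : Prop :=
  forall C1 C2, C1 \in F -> C2 \in F -> C1 :&: C2 != set0 ->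
    (g C1 + g C2 <= g (C1 :|: C2) + g (C1 :&: C2))%R.

From HB Require Import structures.
From mathcomp Require Import all_boot all_order all_algebra.
From mathcomp Require Import zify.
Import Order.TTheory GRing.Theory Num.Theory.
Local Open Scope ring_scope.

(* Every arc of H = A[S,T] starts outside T, so delta^-_H(U) for U inside T is just
   A[S,U]; hence U |-> delta^-_H(U) commutes with union and intersection, and
   C_1 is closed under both.  Supermodularity of g_1 is then submodularity of
   U |-> d^-_{A[T]}(U), evaluated at maximisers U1, U2 of g_1(C1), g_1(C2).
   For the bound, every arc entering U inside T comes either from S (an arc of
   C) or from T, so k <= d^-_A(U) <= d^-_{A[T]}(U) + |C|. *)

Section CrossingFamily.
Variables (V A : finType) (tail head : A -> V).

Local Notation din := (din tail head).
Local Notation ddin := (ddin tail head).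
Local Notation arcs_between := (arcs_between tail head).
Local Notation induced := (induced tail head).

Lemma ddin_submodular (B : {set A}) (X Y : {set V}) :
  (ddin B (X :|: Y) + ddin B (X :&: Y) <= ddin B X + ddin B Y)%N.
Proof.
rewrite /ddin -(cardsUI (din B X)) -(cardsUI (din B (X :|: Y))).
apply: leq_add; apply: subset_leq_card; apply/subsetP => a; rewrite !inE;
  by case: (a \in B); case: (head a \in X); case: (head a \in Y);
     case: (tail a \in X); case: (tail a \in Y).
Qed.

Lemma arcs_betweenUr (X Y Z : {set V}) :
  arcs_between X (Y :|: Z) = arcs_between X Y :|: arcs_between X Z.
Proof. by apply/setP => a; rewrite !inE andb_orr. Qed.

Lemma arcs_betweenIr (X Y Z : {set V}) :
  arcs_between X (Y :&: Z) = arcs_between X Y :&: arcs_between X Z.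
Proof.
by apply/setP => a; rewrite !inE; case: (tail a \in X).
Qed.

Lemma arcs_betweenX0 (X : {set V}) : arcs_between X set0 = set0.
Proof. by apply/setP => a; rewrite !inE andbF. Qed.

Lemma din_arcs_between (X Y U : {set V}) :
  [disjoint X & U] -> U \subset Y -> din (arcs_between X Y) U = arcs_between X U.
Proof.
move=> XU UY; apply/setP => a; rewrite !inE.
case hU: (head a \in U); last by rewrite !andbF.
rewrite (subsetP UY) //= andbT.
by case tX: (tail a \in X); rewrite //= (disjointFr XU tX).
Qed.

Lemma din_setT {S T U : {set V}} : S :|: T = setT -> U \subset T ->
  din setT U = din (induced T) U :|: din (arcs_between S T) U.
Proof.
move=> SUT UT; apply/setP => a; rewrite !inE.
case hU: (head a \in U); rewrite ?andbF //= (subsetP UT _ hU) /=.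
have : tail a \in S :|: T by rewrite SUT inE.
by rewrite inE; case: (tail a \in S); case: (tail a \in T); case: (tail a \in U).
Qed.

Section Bipartition.
Variables (S T : {set V}) (k : int).
Hypothesis disjST : S :&: T = set0.

Local Notation H := (arcs_between S T).
Local Notation C1 := (C1 tail head S T).
Local Notation g1 := (g1 tail head S T k).

Lemma dinH (U : {set V}) : U \subset T -> din H U = arcs_between S U.
Proof.
move=> UT; apply: din_arcs_between => //.
by apply: disjointWr UT _; rewrite -setI_eq0 disjST.
Qed.

Lemma mem_C1 (U : {set V}) :
  U != set0 -> U \subset T -> arcs_between S U \in C1.
Proof. by move=> Un UT; rewrite -dinH //; apply: imset_f; rewrite inE Un. Qed.

Lemma C1P (C : {set A}) :
  C \in C1 -> exists2 U, (U != set0) && (U \subset T) & C = arcs_between S U.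
Proof.
by case/imsetP=> U; rewrite inE => /andP[Un UT] ->; exists U; rewrite ?Un ?dinH.
Qed.

Lemma g1_ge {U : {set V}} : U != set0 -> U \subset T ->
  k - (ddin (induced T) U)%:Z <= g1 (arcs_between S U).
Proof.
move=> Un UT; rewrite /g1 -dinH //.
by apply: (le_bigmax_cond _ (fun U => k - (ddin (induced T) U)%:Z)); rewrite Un UT eqxx.
Qed.

Lemma g1_attained (C : {set A}) : C \in C1 ->
  exists U, [/\ U != set0, U \subset T, C = arcs_between S U &
                g1 C = k - (ddin (induced T) U)%:Z].
Proof.
case/C1P=> U0 /andP[U0n U0T] ->; rewrite /g1 -dinH //.
have [||U] := @eq_bigmax _ _ _ (k - #|A|%:Z) U0
  (fun U => (U != set0) && (U \subset T) && (din H U0 == din H U))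
  (fun U => k - (ddin (induced T) U)%:Z).
- by rewrite U0n U0T eqxx.
- by move=> U _; rewrite lerD2l lerN2 lez_nat max_card.
rewrite unfold_in => /andP[/andP[Un UT] /eqP EU] ->.
by exists U; split; rewrite // EU dinH.
Qed.

Lemma C1_meet_nonempty (U1 U2 : {set V}) :
  arcs_between S U1 :&: arcs_between S U2 != set0 -> U1 :&: U2 != set0.
Proof. by rewrite -arcs_betweenIr; apply: contraNneq => ->; rewrite arcs_betweenX0. Qed.

Lemma C1_intersecting : intersecting_family H C1.
Proof.
split.
  move=> C /C1P[U /andP[_ UT] ->].
  by apply/subsetP => a; rewrite !inE => /andP[-> /(subsetP UT)].
move=> _ _ /C1P[U1 /andP[U1n U1T] ->] /C1P[U2 /andP[U2n U2T] ->] meet.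
rewrite -arcs_betweenUr -arcs_betweenIr; split; apply: mem_C1.
- by rewrite setU_eq0 negb_and U1n.
- by rewrite subUset U1T U2T.
- exact: C1_meet_nonempty.
- by rewrite subIset ?U1T.
Qed.

Lemma g1_supermodular : intersecting_supermodular C1 g1.
Proof.
move=> C1' C2' /g1_attained[U1 [U1n U1T -> ->]] /g1_attained[U2 [_ U2T -> ->]].
move=> /C1_meet_nonempty meet.
have UUn : U1 :|: U2 != set0 by rewrite setU_eq0 negb_and U1n.
have UUT : U1 :|: U2 \subset T by rewrite subUset U1T U2T.
have UIT : U1 :&: U2 \subset T by rewrite subIset ?U1T.
rewrite -arcs_betweenUr -arcs_betweenIr.
apply: le_trans (lerD (g1_ge UUn UUT) (g1_ge meet UIT)) => /=.
have := ddin_submodular (induced T) U1 U2.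
move: (ddin _ U1) (ddin _ U2) (ddin _ (U1 :|: U2)) (ddin _ (U1 :&: U2)).
move=> a b c d; lia.
Qed.

Lemma g1_le_min : S :|: T = setT ->
  (forall U, U != set0 -> U \subset T -> k <= (ddin setT U)%:Z) ->
  forall C, C \in C1 -> g1 C <= Num.min k (#|C|)%:Z.
Proof.
move=> SUT kle C /g1_attained[U [Un UT EC ->]].
have indeg : (ddin setT U <= ddin (induced T) U + #|C|)%N.
  by rewrite /ddin (din_setT SUT UT) dinH // -EC leq_card_setU.
rewrite le_min lerBlDr lerDl lez_nat leq0n /=.
move: (kle U Un UT) indeg; move: (ddin setT U) (ddin (induced T) U) #|C|.
move=> a b c; lia.
Qed.

End Bipartition.
End CrossingFamily.

Theorem mainTheorem5 (V A : finType) (tail head : A -> V) (S T : {set V}) (k : int) :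
  S :&: T = set0 -> S :|: T = setT -> S != set0 -> T != set0 ->
  intersecting_family (arcs_between tail head S T) (C1 tail head S T) /\
  intersecting_supermodular (C1 tail head S T) (g1 tail head S T k) /\
  ((forall U : {set V}, U != set0 -> U \subset T ->
      (k <= (ddin tail head setT U)%:Z)%R) ->
   forall C, C \in C1 tail head S T ->
     (g1 tail head S T k C <= Num.min k (#|C|)%:Z)%R).
Proof.
move=> disjST SUT _ _; split; first exact: C1_intersecting.
by split; [exact: g1_supermodular | exact: g1_le_min].
Qed.
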